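(* Let $(p_D)_{D\in\mathcal{I}}$ be a probability distribution on $\mathcal{I}$, let $q>1$, and for $\mathbf{Q}\in B(\mathcal{L})$ define $$p^T(\mathbf{Q})=\sum_{S\in\mathcal{P}_{\mathbf{Q}}}\frac{p_S}{q-1}\left(1-p_S^{\,q-1}\right),\qquad p_S=\sum_{D\in S}p_D.$$ Then $p^T$ is an arbitrage-free instance-independent pricing function.
   Context: $\mathcal{I}$ is a countable nonempty set of database instances; queries are deterministic functions on $\mathcal{I}$; a query bundle is a finite tuple of queries from a language $\mathcal{L}$, evaluated componentwise; $B(\mathcal{L})$ is the set of bundles, closed under concatenation $\mathbf{Q}_1,\mathbf{Q}_2$. $\mathcal{P}_{\mathbf{Q}}$ is the partition of $\mathcal{I}$ into the equivalence classes of $D\sim D'\iff\mathbf{Q}(D)=\mathbf{Q}(D')$. An instance-independent pricing function $p$ is arbitrage-free if (i) whenever for all $D',D''\in\mathcal{I}$, $\mathbf{Q}_2(D')=\mathbf{Q}_2(D'')$ implies $\mathbf{Q}_1(D')=\mathbf{Q}_1(D'')$, we have $p(\mathbf{Q}_2)\ge p(\mathbf{Q}_1)$; and (ii) $p(\mathbf{Q}_1,\mathbf{Q}_2)\le p(\mathbf{Q}_1)+p(\mathbf{Q}_2)$ for all bundles. *)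

From HB Require Import structures.
From mathcomp Require Import all_boot all_order all_algebra.
From mathcomp Require Import all_classical all_reals all_analysis.
From Stdlib Require List.
Set Implicit Arguments. Unset Strict Implicit. Unset Printing Implicit Defensive.
Import Order.TTheory GRing.Theory Num.Theory.
Local Open Scope classical_set_scope.
Local Open Scope ring_scope.

(* Instances are elements of a type I; a dbquery is a deterministic function
   I -> O (O = type of dbquery answers); a language is a set of queries; a
   qbundle is a finite list of queries of the language, evaluated componentwise. *)

Definition dbquery (I : choiceType) (O : Type) := I -> O.
Definition qbundle (I : choiceType) (O : Type) := seq (dbquery I O).

Definition in_bundles (I : choiceType) (O : Type) (L : set (dbquery I O)) (Q : qbundle I O) : Prop :=
  List.Forall L Q.

Definition beval (I : choiceType) (O : Type) (Q : qbundle I O) (D : I) : seq O :=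
  map (fun f => f D) Q.

Definition bclass (I : choiceType) (O : Type) (Q : qbundle I O) (D : I) : set I :=
  [set D' | beval Q D' = beval Q D].

Definition bpartition (I : choiceType) (O : Type) (Q : qbundle I O) : set (set I) :=
  [set S | exists D, S = bclass Q D].

Definition prob_distr (R : realType) (I : choiceType) (p : I -> R) : Prop :=
  (forall D, 0 <= p D) /\ (\esum_(D in [set: I]) (p D)%:E = 1)%E.

(* p_S = sum_{D in S} p_D  (a real number in [0,1] for a distribution) *)
Definition pmass (R : realType) (I : choiceType) (p : I -> R) (S : set I) : R :=
  fine (\esum_(D in S) (p D)%:E).

Definition pT_ext (R : realType) (I : choiceType) (O : Type) (p : I -> R) (q : R)
  (Q : qbundle I O) : \bar R :=
  \esum_(S in bpartition Q)
     ((pmass p S / (q - 1)) * (1 - (pmass p S) `^ (q - 1)))%:E.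

(* p^T(Q) as a real number (the sum is shown finite in the theorem) *)
Definition pT (R : realType) (I : choiceType) (O : Type) (p : I -> R) (q : R)
  (Q : qbundle I O) : R := fine (pT_ext p q Q).

Definition arbitrage_free (R : realType) (I : choiceType) (O : Type) (L : set (dbquery I O))
  (pr : qbundle I O -> R) : Prop :=
  (forall Q1 Q2 : qbundle I O, in_bundles L Q1 -> in_bundles L Q2 ->
     (forall D' D'' : I, beval Q2 D' = beval Q2 D'' -> beval Q1 D' = beval Q1 D'') ->
     pr Q1 <= pr Q2)
  /\
  (forall Q1 Q2 : qbundle I O, in_bundles L Q1 -> in_bundles L Q2 ->
     pr (Q1 ++ Q2) <= pr Q1 + pr Q2).

From HB Require Import structures.
From mathcomp Require Import all_boot all_order all_algebra.
From mathcomp Require Import all_classical all_reals all_analysis.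
From mathcomp Require Import ring lra.
Import Order.TTheory GRing.Theory Num.Theory.
Set Implicit Arguments. Unset Strict Implicit. Unset Printing Implicit Defensive.
Local Open Scope classical_set_scope.
Local Open Scope ring_scope.

(* p^T(Q) is the Tsallis entropy of the partition P_Q: the expectation, over a
   random instance D, of the surprisal s(m) = (1 - m^(q-1)) / (q-1) of the mass m
   of the class of D.  As s decreases and refining a partition shrinks class
   masses, p^T is monotone.  For subadditivity let a, b, c be the masses of the
   class of D under Q1, Q2 and Q1,Q2.  Pointwise s(c) = s(a * c/a) <= s(a) + s(c/a),
   since (1 - a^(q-1)) (1 - (c/a)^(q-1)) >= 0; and E[s(c/a)] <= E[s(b)] is Jensen's
   inequality sum_j b_j^q <= sum_i a_i sum_j (c_ij / a_i)^q for the convex t^q. *)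

Section esum_lemmas.
Variable R : realType.
Local Open Scope ereal_scope.

Lemma esumZl (T : choiceType) (S : set T) (k : R) (a : T -> \bar R) :
  (0 <= k)%R -> (forall x, 0 <= a x) ->
  \esum_(x in S) (k%:E * a x) = k%:E * \esum_(x in S) a x.
Proof.
move=> k0 a0; rewrite /esum -ereal_supZl//; last first.
  by apply/set0P; exists 0; exists set0; [exact: fsets_set0 | rewrite fsbig_set0].
congr ereal_sup; apply/seteqP; split => x /=.
  by move=> [A SA <-]; exists (\sum_(i \in A) a i); [exists A | rewrite ge0_mule_fsumr].
by move=> [y [A SA <-] <-]; exists A => //; rewrite ge0_mule_fsumr.
Qed.

Lemma le_esum_subset (T : choiceType) (S1 S2 : set T) (a : T -> \bar R) :
  (forall x, 0 <= a x) -> S1 `<=` S2 ->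
  \esum_(x in S1) a x <= \esum_(x in S2) a x.
Proof.
move=> a0 S12; rewrite (esumID S1 S2)// (setIidr S12) leeDl//.
exact: esum_ge0.
Qed.

Lemma esum_esum_swap (T1 T2 : choiceType) (A : set T1) (E : T1 -> set T2)
    (f : T1 -> T2 -> \bar R) : (forall x y, 0 <= f x y) ->
  \esum_(x in A) \esum_(y in E x) f x y =
  \esum_(y in [set: T2]) \esum_(x in [set x | A x /\ E x y]) f x y.
Proof.
move=> f0; rewrite !esum_esum//.
rewrite (reindex_esum ([set: T2] `*`` fun y => [set x | A x /\ E x y]) (A `*`` E)
  (fun k => (k.2, k.1)))//; split.
- by move=> [y x] [_ /= [Ax Exy]].
- by move=> [y1 x1] [y2 x2] _ _ /= [-> ->].
- by move=> [x y] [/= Ax Exy]; exists (y, x).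
Qed.

Lemma esum_partition (T : choiceType) (P : set (set T)) (a : T -> \bar R) :
  (forall x, 0 <= a x) -> (forall x, exists2 S, P S & S x) ->
  (forall S1 S2 x, P S1 -> P S2 -> S1 x -> S2 x -> S1 = S2) ->
  \esum_(S in P) \esum_(x in S) a x = \esum_(x in [set: T]) a x.
Proof.
move=> a0 cover disj; rewrite esum_esum//.
rewrite (reindex_esum (P `*`` id) [set: T] snd)//; split.
- by [].
- move=> [S1 x] [S2 y] /[!inE] -[/= P1 S1x] [/= P2 S2y] /= xy; subst y.
  by rewrite (disj S1 S2 x).
- by move=> x _; have [S PS Sx] := cover x; exists (S, x).
Qed.

End esum_lemmas.

(* [bclass Q] is convertible to [fibre (beval Q)]. *)
Definition fibre (T K : Type) (f : T -> K) (x : T) : set T := f @^-1` [set f x].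

Lemma fibre_sym (T K : Type) (f : T -> K) x y : fibre f x y -> fibre f y x.
Proof. by rewrite /fibre /preimage /= => ->. Qed.

Lemma fibre_eq (T K : Type) (f : T -> K) x y : fibre f x y -> fibre f y = fibre f x.
Proof. by rewrite /fibre /preimage /= => ->. Qed.

Lemma bclass_cat (I : choiceType) (O : Type) (Q1 Q2 : qbundle I O) :
  bclass (Q1 ++ Q2) = fun D => fibre (beval Q1) D `&` fibre (beval Q2) D.
Proof.
apply/funext => D; rewrite /bclass /fibre /beval; apply/seteqP; split => x /=.
  rewrite !map_cat => e; split.
    by have := congr1 (take (size Q1)) e; rewrite !take_size_cat ?size_map.
  by have := congr1 (drop (size Q1)) e; rewrite !drop_size_cat ?size_map.
by move=> [e1 e2]; rewrite !map_cat e1 e2.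
Qed.

Section powR_inequalities.
Variable R : realType.

Lemma powR_le1 (x r : R) : 0 <= x <= 1 -> 0 <= r -> x `^ r <= 1.
Proof.
move=> /andP[x0 x1] r0.
by rewrite (le_trans (ge0_ler_powR r0 _ _ x1)) ?powR1 ?nnegrE.
Qed.

Lemma powR_add_le (x y r : R) : 0 <= x <= 1 -> 0 <= y <= 1 -> 0 <= r ->
  x `^ r + y `^ r <= 1 + (x * y) `^ r.
Proof.
move=> x01 y01 r0; have /andP[x0 _] := x01; have /andP[y0 _] := y01.
have X1 := powR_le1 x01 r0; have Y1 := powR_le1 y01 r0.
rewrite powRM//; move: (x `^ r) (y `^ r) X1 Y1 => X Y X1 Y1; nra.
Qed.

Lemma powR_tangent_le (x y q : R) : 0 <= x -> 0 <= y -> 1 < q ->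
  y `^ q + q * y `^ (q - 1) * (x - y) <= x `^ q.
Proof.
move=> x0 y0 q1; have q0 : 0 < q by apply: lt_trans q1.
have r0 : 0 < q - 1 by rewrite subr_gt0.
(* Young's inequality for the conjugate exponents q and q / (q - 1) *)
have young := @conjugate_powR _ x (y `^ (q - 1)) q (q / (q - 1)) x0 (powR_ge0 _ _)
  q0 (divr_gt0 q0 r0).
have e : (q - 1) * (q / (q - 1)) = q by field; rewrite gt_eqF.
rewrite -powRrM e -(mulr_powRB1 y0 q0) in young.
rewrite -(mulr_powRB1 y0 q0).
move: young; set Y := y `^ (q - 1); set X := x `^ q => young.
have {young}young : q * (x * Y) <= X + (q - 1) * (y * Y).
  have -> : X + (q - 1) * (y * Y) = q * (X / q + y * Y / (q / (q - 1))).
    by field; rewrite !gt_eqF.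
  rewrite ler_pM2l// young//.
  by rewrite invf_div; field; rewrite !gt_eqF.
lra.
Qed.

(* powR_tangent_le at c/a divided by c/a, the last term kept in the shape that
   pexpect_cell_le bounds. *)
Lemma powR_tangent_ratio_le (q a b c : R) : 1 < q -> 0 < c <= a -> 0 <= b ->
  q * b `^ (q - 1) <= (c / a) `^ (q - 1) + (q - 1) * (a * (b * b `^ (q - 1) / c)).
Proof.
move=> q1 /andP[c0 ca] b0; have q0 : 0 < q by apply: lt_trans q1.
have a0 : 0 < a := lt_le_trans c0 ca; set x := c / a.
have x0 : 0 < x by rewrite divr_gt0.
have := powR_tangent_le (ltW x0) b0 q1.
rewrite -(mulr_powRB1 b0 q0) -(mulr_powRB1 (ltW x0) q0) => tangent.
have -> : a * (b * b `^ (q - 1) / c) = b * b `^ (q - 1) / x.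
  by rewrite /x; field; rewrite !gt_eqF.
move: tangent; set X := x `^ (q - 1); set B := b `^ (q - 1) => tangent.
rewrite -(ler_pM2r x0).
have -> : (X + (q - 1) * (b * B / x)) * x = x * X + (q - 1) * (b * B).
  by field; rewrite gt_eqF.
lra.
Qed.

End powR_inequalities.

(* The q-logarithm of 1/x. *)
Definition tsallis_surprisal (R : realType) (q x : R) : R := (1 - x `^ (q - 1)) / (q - 1).

Section tsallis_surprisal.
Variables (R : realType) (q : R).
Hypothesis q_gt1 : 1 < q.

Let qB1_gt0 : 0 < q - 1. Proof. by rewrite subr_gt0. Qed.

Lemma tsallis_surprisal_ge0 x : 0 <= x <= 1 -> 0 <= tsallis_surprisal q x.
Proof. by move=> x01; rewrite divr_ge0 ?subr_ge0 ?(powR_le1 x01) ?ltW. Qed.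

Lemma tsallis_surprisal_le x : tsallis_surprisal q x <= (q - 1)^-1.
Proof. by rewrite ler_pdivrMr// mulVf ?gt_eqF// gerBl powR_ge0. Qed.

Lemma le_tsallis_surprisal x y : 0 <= x <= y ->
  tsallis_surprisal q y <= tsallis_surprisal q x.
Proof.
move=> /andP[x0 xy]; rewrite ler_pM2r ?invr_gt0// lerD2l lerN2.
have y0 := le_trans x0 xy; have r_ge0 := ltW qB1_gt0.
by apply: ge0_ler_powR; rewrite ?nnegrE.
Qed.

Lemma tsallis_surprisalM_le x y : 0 <= x <= 1 -> 0 <= y <= 1 ->
  tsallis_surprisal q (x * y) <= tsallis_surprisal q x + tsallis_surprisal q y.
Proof.
move=> x01 y01; rewrite -mulrDl ler_pM2r ?invr_gt0//.
by have := powR_add_le x01 y01 (ltW qB1_gt0); lra.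
Qed.

Lemma tsallis_surprisalE x :
  tsallis_surprisal q x = (q - 1)^-1 - (q - 1)^-1 * x `^ (q - 1).
Proof. by rewrite /tsallis_surprisal mulrBl mul1r mulrC. Qed.

End tsallis_surprisal.

Section expectation.
Variables (R : realType) (I : choiceType) (p : I -> R).
Hypothesis p_ge0 : forall D, 0 <= p D.
Hypothesis p_sum1 : (\esum_(D in [set: I]) (p D)%:E = 1)%E.

Let esum_p_ge0 (S : set I) : (0 <= \esum_(D in S) (p D)%:E)%E.
Proof. by apply: esum_ge0 => D _; rewrite lee_fin. Qed.

Let le_esum_p (S1 S2 : set I) : S1 `<=` S2 ->
  (\esum_(D in S1) (p D)%:E <= \esum_(D in S2) (p D)%:E)%E.
Proof. by apply: le_esum_subset => D; rewrite lee_fin. Qed.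

Lemma pmassE (S : set I) : \esum_(D in S) (p D)%:E = (pmass p S)%:E.
Proof.
rewrite /pmass fineK// ge0_fin_numE ?esum_p_ge0//.
by rewrite (le_lt_trans _ (ltry 1))// -p_sum1 le_esum_p.
Qed.

Lemma pmass_ge0 (S : set I) : 0 <= pmass p S.
Proof. by rewrite -lee_fin -pmassE esum_p_ge0. Qed.

Lemma le_pmass (S1 S2 : set I) : S1 `<=` S2 -> pmass p S1 <= pmass p S2.
Proof. by move=> S12; rewrite -lee_fin -!pmassE le_esum_p. Qed.

Lemma pmass_le1 (S : set I) : pmass p S <= 1.
Proof. by rewrite -lee_fin -pmassE -p_sum1 le_esum_p. Qed.

Lemma le_p_pmass (S : set I) D : S D -> p D <= pmass p S.
Proof.
move=> SD; rewrite -lee_fin -pmassE -(@esum_set1 _ _ D (fun D => (p D)%:E)).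
  by apply: le_esum_p => _ ->.
by rewrite lee_fin.
Qed.

Lemma esum_p_div_pmass_le1 (S : set I) : (\esum_(D in S) (p D / pmass p S)%:E <= 1)%E.
Proof.
under eq_esum do rewrite mulrC EFinM.
rewrite esumZl; last 2 first.
- by rewrite invr_ge0 pmass_ge0.
- by move=> D; rewrite lee_fin.
rewrite pmassE -EFinM lee_fin.
have [->|S0] := eqVneq (pmass p S) 0; first by rewrite invr0 mul0r.
by rewrite mulVf.
Qed.

Definition pexpect (h : I -> R) : \bar R := \esum_(D in [set: I]) (p D * h D)%:E.

Lemma pexpect_ge0 h : (forall D, 0 <= h D) -> (0 <= pexpect h)%E.
Proof. by move=> h0; apply: esum_ge0 => D _; rewrite lee_fin mulr_ge0. Qed.

Lemma pexpectZl k h : 0 <= k -> (forall D, 0 <= h D) ->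
  pexpect (fun D => k * h D) = (k%:E * pexpect h)%E.
Proof.
move=> k0 h0; rewrite /pexpect -esumZl// => [|D]; last by rewrite lee_fin mulr_ge0.
by apply: eq_esum => D _; rewrite -EFinM mulrCA.
Qed.

Lemma pexpectD h1 h2 : (forall D, 0 <= h1 D) -> (forall D, 0 <= h2 D) ->
  pexpect (fun D => h1 D + h2 D) = (pexpect h1 + pexpect h2)%E.
Proof.
move=> h10 h20; rewrite /pexpect -esumD; last 2 first.
- by move=> D _; rewrite lee_fin mulr_ge0.
- by move=> D _; rewrite lee_fin mulr_ge0.
by apply: eq_esum => D _; rewrite mulrDr EFinD.
Qed.

Lemma pexpect_cst k : 0 <= k -> pexpect (fun=> k) = k%:E.
Proof.
move=> k0; rewrite /pexpect; under eq_esum do rewrite mulrC EFinM.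
by rewrite esumZl// p_sum1 mule1.
Qed.

Lemma le_pexpect h1 h2 : (forall D, 0 < p D -> h1 D <= h2 D) ->
  (pexpect h1 <= pexpect h2)%E.
Proof.
move=> h12; apply: le_esum => D _; rewrite lee_fin.
have [pD0|pD] := eqVneq (p D) 0; first by rewrite pD0 !mul0r.
by rewrite ler_wpM2l ?h12// lt0r pD p_ge0.
Qed.

Lemma pexpect_fin h K : 0 <= K -> (forall D, 0 <= h D <= K) -> pexpect h \is a fin_num.
Proof.
move=> K0 hK.
rewrite ge0_fin_numE; last by apply: pexpect_ge0 => D; have /andP[] := hK D.
apply: (@le_lt_trans _ _ (pexpect (fun=> K))); last by rewrite pexpect_cst// ltry.
by apply: le_pexpect => D _; have /andP[] := hK D.
Qed.

Lemma pexpect_class_mass (K : Type) (f : I -> K) (phi : R -> R) :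
  (forall x, 0 <= x <= 1 -> 0 <= phi x) ->
  pexpect (fun D => phi (pmass p (fibre f D))) =
  \esum_(S in [set S | exists D, S = fibre f D]) (pmass p S * phi (pmass p S))%:E.
Proof.
move=> phi0; have phi_mass0 S : 0 <= phi (pmass p S) by rewrite phi0 ?pmass_ge0 ?pmass_le1.
rewrite /pexpect -(@esum_partition _ _ [set S | exists D, S = fibre f D]); last 3 first.
- by move=> D; rewrite lee_fin mulr_ge0.
- by move=> D; exists (fibre f D); [exists D | rewrite /fibre].
- by move=> S1 S2 D [D1 ->] [D2 ->] h1 h2; rewrite -(fibre_eq h1) -(fibre_eq h2).
apply: eq_esum => _ [D0 ->].
transitivity (\esum_(D in fibre f D0) ((phi (pmass p (fibre f D0)))%:E * (p D)%:E))%E.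
  by apply: eq_esum => D h; rewrite (fibre_eq h) -EFinM mulrC.
by rewrite esumZl// pmassE -EFinM mulrC.
Qed.

Lemma esum_pmassM (A : set I) (C : I -> set I) (k : I -> R) :
  (forall D, 0 <= k D) ->
  \esum_(D in A) (p D * (pmass p (C D) * k D))%:E =
  \esum_(D' in [set: I]) ((p D')%:E * \esum_(D in A `&` [set D | C D D']) (p D * k D)%:E)%E.
Proof.
move=> k0; have pk0 D : 0 <= p D * k D by rewrite mulr_ge0.
transitivity (\esum_(D in A) \esum_(D' in C D) ((p D * k D)%:E * (p D')%:E))%E.
  by apply: eq_esum => D _; rewrite esumZl// pmassE -EFinM mulrAC mulrA.
rewrite esum_esum_swap; last by move=> D D'; rewrite -EFinM lee_fin mulr_ge0.
apply: eq_esum => D' _; rewrite -esumZl//.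
by apply: eq_esum => D _; rewrite muleC.
Qed.

Variable q : R.
Hypothesis q_gt1 : 1 < q.

Let pexpect_powR_fin h : (forall D, 0 <= h D <= 1) ->
  pexpect (fun D => h D `^ (q - 1))%R \is a fin_num.
Proof.
move=> h01; apply: (pexpect_fin ler01) => D.
by rewrite powR_ge0 powR_le1// subr_ge0 ltW.
Qed.

Lemma pexpect_tsallis_surprisal (h : I -> R) : (forall D, 0 <= h D <= 1) ->
  pexpect (fun D => tsallis_surprisal q (h D)) =
  ((q - 1)^-1 - (q - 1)^-1 * fine (pexpect (fun D => h D `^ (q - 1))%R))%:E.
Proof.
move=> h01; have r0 : 0 <= (q - 1)^-1 by rewrite invr_ge0 subr_ge0 ltW.
have Hfin := pexpect_powR_fin h01.
have Sfin : pexpect (fun D => tsallis_surprisal q (h D)) \is a fin_num.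
  apply: (pexpect_fin r0) => D.
  by rewrite tsallis_surprisal_ge0// tsallis_surprisal_le.
have e : (pexpect (fun D => tsallis_surprisal q (h D)) +
          ((q - 1)^-1)%:E * pexpect (fun D => h D `^ (q - 1))%R)%E = ((q - 1)^-1)%:E.
  rewrite -pexpectZl//; last by move=> D; exact: powR_ge0.
  rewrite -pexpectD; last 2 first.
  - by move=> D; exact: tsallis_surprisal_ge0.
  - by move=> D; rewrite mulr_ge0 ?powR_ge0.
  rewrite -pexpect_cst//; congr pexpect; apply/funext => D.
  by rewrite tsallis_surprisalE subrK.
rewrite -(fineK Sfin) in e *; rewrite -(fineK Hfin) -EFinM -EFinD in e.
by have {}e := EFin_inj e; congr (_%:E); lra.
Qed.

Lemma le_pexpect_tsallis_surprisal (h1 h2 : I -> R) :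
  (forall D, 0 <= h1 D <= 1) -> (forall D, 0 <= h2 D <= 1) ->
  (pexpect (fun D => h2 D `^ (q - 1))%R <= pexpect (fun D => h1 D `^ (q - 1))%R)%E ->
  (pexpect (fun D => tsallis_surprisal q (h1 D)) <=
   pexpect (fun D => tsallis_surprisal q (h2 D)))%E.
Proof.
move=> h1_01 h2_01 le21; rewrite !pexpect_tsallis_surprisal// lee_fin lerD2l lerN2.
have r0 : 0 <= (q - 1)^-1 by rewrite invr_ge0 subr_ge0 ltW.
by rewrite ler_wpM2l// fine_le// pexpect_powR_fin.
Qed.

End expectation.

Section common_refinement.
Variables (R : realType) (I : choiceType) (p : I -> R).
Hypothesis p_ge0 : forall D, 0 <= p D.
Hypothesis p_sum1 : (\esum_(D in [set: I]) (p D)%:E = 1)%E.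
Variables (K1 K2 : Type) (f1 : I -> K1) (f2 : I -> K2).

Let a D := pmass p (fibre f1 D).
Let b D := pmass p (fibre f2 D).
Let c D := pmass p (fibre f1 D `&` fibre f2 D).

Let cell D' D'' := [set x | fibre f1 x D'] `&` [set x | fibre f2 x D''].

Let cell_mass D' D'' D : cell D' D'' D -> c D = pmass p (cell D' D'').
Proof.
rewrite /c /cell /fibre /preimage /= => -[e1 e2]; congr pmass; apply/seteqP.
by rewrite -e1 -e2; split => x [/= -> ->].
Qed.

Let esum_cell_le (k : I -> R) D' D'' : (forall D, 0 <= k D) ->
  (forall D, fibre f2 D'' D -> k D = k D'') ->
  (\esum_(D in cell D' D'') (p D * (k D / c D))%:E <= (k D'')%:E)%E.
Proof.
move=> k0 k_const; set S := cell D' D''.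
rewrite (@eq_esum _ _ S _ (fun D => (k D'')%:E * (p D / pmass p S)%:E)%E); last first.
  move=> D SD; have [_ SD2] := SD.
  by rewrite (k_const D (fibre_sym SD2)) (cell_mass SD) -EFinM mulrCA mulrA.
rewrite esumZl//; last by move=> D; rewrite lee_fin divr_ge0 ?pmass_ge0.
rewrite -[leRHS]mule1 lee_wpmul2l ?lee_fin//.
exact: esum_p_div_pmass_le1.
Qed.

(* Grouping by the cells C_ij = (class i of f1) `&` (class j of f2), the left side
   is sum over nonempty C_ij of a_i b_j k_j <= (sum_i a_i) (sum_j b_j k_j). *)
Lemma pexpect_cell_le (k : I -> R) : (forall D, 0 <= k D) ->
  (forall D D', fibre f2 D D' -> k D' = k D) ->
  (pexpect p (fun D => a D * (b D * k D / c D))%R <= pexpect p k)%E.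
Proof.
move=> k0 k_const; have kc0 D : 0 <= k D / c D by rewrite divr_ge0 ?pmass_ge0.
have [Ek_fin|] := boolP (pexpect p k \is a fin_num); last first.
  by rewrite ge0_fin_numE ?pexpect_ge0// ltey => /negbNE/eqP ->; exact: leey.
have inner D' : (\esum_(D in [set D | fibre f1 D D'])
    (p D * (b D * k D / c D))%:E <= pexpect p k)%E.
  under eq_esum do rewrite -mulrA.
  rewrite (esum_pmassM p_ge0 p_sum1 _ _ kc0) /pexpect.
  apply: le_esum => D'' _; rewrite EFinM lee_wpmul2l ?lee_fin//.
  by apply: esum_cell_le => // D /k_const.
rewrite /pexpect (@esum_pmassM _ _ p p_ge0 p_sum1 [set: I] (fibre f1)
  (fun D => b D * k D / c D)); last first.
  by move=> D; rewrite divr_ge0 ?mulr_ge0 ?pmass_ge0.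
apply: (@le_trans _ _ (\esum_(D' in [set: I]) ((fine (pexpect p k))%:E * (p D')%:E))%E).
  apply: le_esum => D' _; rewrite fineK// [leRHS]muleC lee_wpmul2l ?lee_fin//.
  by rewrite setTI; exact: inner.
by rewrite esumZl ?fine_ge0 ?pexpect_ge0// p_sum1 mule1 fineK.
Qed.

Variable q : R.
Hypothesis q_gt1 : 1 < q.

Let mass01 (S : set I) : 0 <= pmass p S <= 1.
Proof. by rewrite pmass_ge0 ?pmass_le1. Qed.

Let c_le_a D : c D <= a D.
Proof. by apply: le_pmass => // x []. Qed.

Let c_gt0 D : 0 < p D -> 0 < c D.
Proof. by move=> pD; apply: lt_le_trans pD _; apply: le_p_pmass. Qed.

Let ratio01 D : 0 <= c D / a D <= 1.
Proof.
rewrite divr_ge0 ?pmass_ge0//=.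
have [->|a0] := eqVneq (a D) 0; first by rewrite invr0 mulr0.
by rewrite ler_pdivrMr ?mul1r// lt0r a0 pmass_ge0.
Qed.

(* The tangent line of t^q at b, taken at c/a and averaged, bounds q E[b^(q-1)] by
   E[(c/a)^(q-1)] + (q-1) L, and L <= E[b^(q-1)] by pexpect_cell_le. *)
Lemma pexpect_powR_mass_le : (pexpect p (fun D => b D `^ (q - 1))%R
  <= pexpect p (fun D => (c D / a D) `^ (q - 1))%R)%E.
Proof.
have r0 : 0 <= q - 1 by rewrite subr_ge0 ltW.
have q0 : 0 <= q by rewrite (le_trans ler01) ?ltW.
have powR01 x : 0 <= x <= 1 -> 0 <= x `^ (q - 1) <= 1.
  by move=> x01; rewrite powR_ge0 (powR_le1 x01).
set B := pexpect p _; set X := pexpect p _.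
set L := pexpect p (fun D => a D * (b D * b D `^ (q - 1) / c D))%R.
have tangent : (q%:E * B <= X + (q - 1)%:E * L)%E.
  rewrite -!pexpectZl//; last 2 first.
  - by move=> D; rewrite !mulr_ge0 ?invr_ge0 ?powR_ge0 ?pmass_ge0.
  - by move=> D; exact: powR_ge0.
  rewrite -pexpectD//; last 2 first.
  - by move=> D; exact: powR_ge0.
  - by move=> D; rewrite !mulr_ge0 ?invr_ge0 ?powR_ge0 ?pmass_ge0.
  apply: (le_pexpect p_ge0) => D pD.
  by apply: powR_tangent_ratio_le; rewrite ?pmass_ge0// c_le_a c_gt0.
have LB : (L <= B)%E.
  apply: pexpect_cell_le => // [D|D D' DD']; first exact: powR_ge0.
  by rewrite /b (fibre_eq DD').
have Bfin : B \is a fin_num.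
  by apply: (pexpect_fin p_ge0 p_sum1 ler01) => D; exact/powR01/mass01.
have Xfin : X \is a fin_num.
  by apply: (pexpect_fin p_ge0 p_sum1 ler01) => D; exact/powR01/ratio01.
have Lfin : L \is a fin_num.
  have L0 : (0 <= L)%E.
    apply: (pexpect_ge0 p_ge0) => D.
    by rewrite mulr_ge0 ?pmass_ge0// divr_ge0 ?mulr_ge0 ?powR_ge0 ?pmass_ge0.
  by rewrite ge0_fin_numE// (le_lt_trans LB)// ltey_eq Bfin.
move: tangent LB; rewrite -(fineK Bfin) -(fineK Xfin) -(fineK Lfin).
by rewrite -!EFinM -EFinD !lee_fin => tangent LB; nra.
Qed.

Lemma pexpect_tsallis_surprisal_subadd :
  (pexpect p (fun D => tsallis_surprisal q (c D)) <=
   pexpect p (fun D => tsallis_surprisal q (a D)) +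
   pexpect p (fun D => tsallis_surprisal q (b D)))%E.
Proof.
apply: (@le_trans _ _ (pexpect p (fun D => tsallis_surprisal q (a D)) +
                       pexpect p (fun D => tsallis_surprisal q (c D / a D)))%E).
  rewrite -pexpectD//; last 2 first.
  - by move=> D; exact: tsallis_surprisal_ge0 (mass01 _).
  - by move=> D; exact: tsallis_surprisal_ge0 (ratio01 _).
  apply: (le_pexpect p_ge0) => D pD.
  have a0 : a D != 0 by rewrite gt_eqF// (lt_le_trans (c_gt0 pD)).
  rewrite -{1}(divfK a0 (c D)) mulrC.
  exact: tsallis_surprisalM_le q_gt1 _ _ (mass01 _) (ratio01 D).
apply: leeD => //; apply: (le_pexpect_tsallis_surprisal p_ge0 p_sum1 q_gt1 ratio01).
  by move=> D; exact: mass01.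
exact: pexpect_powR_mass_le.
Qed.

Lemma le_pexpect_tsallis_surprisal_refine : (forall D, fibre f2 D `<=` fibre f1 D) ->
  (pexpect p (fun D => tsallis_surprisal q (a D)) <=
   pexpect p (fun D => tsallis_surprisal q (b D)))%E.
Proof.
move=> refine; apply: (le_pexpect p_ge0) => D _; apply: le_tsallis_surprisal => //.
by rewrite (pmass_ge0 p_ge0 p_sum1) /=; exact: (le_pmass p_ge0 p_sum1 (refine D)).
Qed.

End common_refinement.

Lemma pT_extE (R : realType) (I : choiceType) (O : Type) (p : I -> R) (q : R)
    (Q : qbundle I O) :
  (forall D, 0 <= p D) -> (\esum_(D in [set: I]) (p D)%:E = 1)%E -> 1 < q ->
  pT_ext p q Q = pexpect p (fun D => tsallis_surprisal q (pmass p (bclass Q D))).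
Proof.
move=> p_ge0 p_sum1 q_gt1.
rewrite (pexpect_class_mass p_ge0 p_sum1 (beval Q) (phi := tsallis_surprisal q)); last first.
  by move=> x x01; exact: tsallis_surprisal_ge0.
by apply: eq_esum => S _; rewrite mulrA mulrAC.
Qed.

Theorem lemma18 (R : realType) (I : countType) (O : Type)
  (L : set (dbquery I O)) (p : I -> R) (q : R) :
  inhabited I -> prob_distr p -> 1 < q ->
  (forall Q : qbundle I O, in_bundles L Q -> pT_ext p q Q \is a fin_num) /\
  arbitrage_free L (pT (O := O) p q).
Proof.
(* nonemptiness of I already follows from the total mass 1 *)
move=> _ [p_ge0 p_sum1] q_gt1.
have pT_extE' Q := pT_extE Q p_ge0 p_sum1 q_gt1.
have pT_fin Q : pT_ext p q Q \is a fin_num.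
  rewrite pT_extE'; apply: (pexpect_fin p_ge0 p_sum1 (K := (q - 1)^-1)).
    by rewrite invr_ge0 subr_ge0 ltW.
  move=> D; rewrite tsallis_surprisal_le// tsallis_surprisal_ge0//.
  by rewrite pmass_ge0 ?pmass_le1.
split=> [Q _|]; first exact: pT_fin.
split=> [Q1 Q2 _ _ refines | Q1 Q2 _ _]; rewrite /pT.
  apply: fine_le; rewrite ?pT_fin// !pT_extE'.
  apply: le_pexpect_tsallis_surprisal_refine => // D x.
  exact: refines.
rewrite -fineD ?pT_fin//; apply: fine_le; rewrite ?fin_numD ?pT_fin// !pT_extE' bclass_cat.
exact: pexpect_tsallis_surprisal_subadd.
Qed.
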